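(* Let $G$ be a finite simple graph with edge weight function $w$ and vertex weight function $w_1$. Then (a) the multiplicity of any root of $\eta_{(w,w_1)}(G,x)$ is at most the number of paths in any family of vertex-disjoint paths (single vertices allowed) covering all vertices of $G$; (b) the number of distinct roots of $\eta_{(w,w_1)}(G,x)$ is at least the number of vertices of a longest path in $G$.
   Context: An edge weight function $w$ assigns a nonzero complex number to each edge; a vertex weight function $w_1$ assigns a real number (possibly $0$) to each vertex; induced subgraphs carry restricted weights. For $A\subseteq E(G)$, $w(A)=\prod_{e\in A}w(e)$. $\mu_w(G,x)=\sum_{M}(-1)^{|M|}|w(M)|^2x^{n-2|M|}$ over all matchings $M$ (including empty), $n=|V(G)|$. $\eta_{(w,w_1)}(G,x)=\sum_{S\subseteq V(G)}(-1)^{|V(G)\setminus S|}\big(\prod_{y\in V(G)\setminus S}w_1(y)\big)\mu_w(G[S],x)$ with $G[S]$ the induced subgraph and $\mu_w$ of the empty graph equal to $1$. *)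

From HB Require Import structures.
From mathcomp Require Import all_boot all_order all_algebra.
Set Implicit Arguments. Unset Strict Implicit. Unset Printing Implicit Defensive.
Import Order.TTheory GRing.Theory Num.Theory.
Local Open Scope ring_scope.

(* A finite simple graph: vertex type V : finType, adjacency adj : rel V,
   assumed symmetric and irreflexive (hypotheses in the theorem).
   Edges are the 2-element sets [set x; y] with adj x y. *)

Definition is_edge_in (V : finType) (adj : rel V) (S : {set V}) (e : {set V}) : bool :=
  [exists x : V, exists y : V,
     [&& adj x y, x \in S, y \in S & e == [set x; y]]].

Definition is_matching (V : finType) (adj : rel V) (S : {set V})
    (M : {set {set V}}) : bool :=
  [forall e in M, is_edge_in adj S e] &&
  [forall e1 in M, forall e2 in M, (e1 != e2) ==> [disjoint e1 & e2]].

Definition mu_w (C : numClosedFieldType) (V : finType) (adj : rel V)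
    (w : {set V} -> C) (S : {set V}) : {poly C} :=
  \sum_(M : {set {set V}} | is_matching adj S M)
     ((-1) ^+ #|M| * \prod_(e in M) `|w e| ^+ 2) *: 'X^(#|S| - 2 * #|M|).

Definition eta_w (C : numClosedFieldType) (V : finType) (adj : rel V)
    (w : {set V} -> C) (w1 : V -> C) : {poly C} :=
  \sum_(S : {set V})
     ((-1) ^+ #|~: S| * \prod_(y in ~: S) w1 y) *: mu_w adj w S.

Definition is_gpath (V : finType) (adj : rel V) (p : seq V) : bool :=
  if p is x :: q then uniq p && path adj x q else false.

Definition is_path_cover (V : finType) (adj : rel V) (P : seq (seq V)) : bool :=
  all (is_gpath adj) P && uniq (flatten P) && (#|V| == size (flatten P))%N.

(* Write [f S] for eta of the induced subgraph [G[S]].  Splitting the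
   matchings of [G[S]] according to the edge covering a vertex [u] gives the
   vertex recurrence
     [f S = (x - w1 u) f (S - u) - sum_(v ~ u) |w uv|^2 f (S - u - v)],
   and the rest of the argument uses only this recurrence, with real
   [w1 u] and positive coefficients [|w uv|^2].  Such a family is
   real-rooted, and it satisfies the Christoffel-Darboux type identities
     [f (S - u) f (S - v) - f S f (S - u - v) = sum_P c(P) f (S - P)^2],
     [f (S - u) f' S - f' (S - u) f S = f (S - u)^2 + sum_v sum_P ...],
   the sums running over the paths [P] from [u] to [v] in [G[S]] with
   positive weights [c(P)].  At a real root a sum of positively weighted
   squares of real polynomials vanishes to order at most twice the order of
   any of its squares, while the left-hand sides vanish to high order; this
   yields [mult (f S) <= mult (f (S - P)) + 1] for every path [P].
   Peeling off the paths of a cover gives (a); for (b), the roots of [f V]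
   counted with multiplicity exceed those of [f (V - P)], which has degree
   [|V| - |P|], by at most one per distinct root. *)

From HB Require Import structures.
From mathcomp Require Import all_boot all_order all_algebra.
From mathcomp Require Import ring zify.
Import Order.TTheory GRing.Theory Num.Theory.
Local Open Scope ring_scope.

Set Implicit Arguments.
Unset Strict Implicit.
Unset Printing Implicit Defensive.

Lemma setD1C (V : finType) (A : {set V}) x y : A :\ x :\ y = A :\ y :\ x.
Proof. by rewrite !setDDl setUC. Qed.

Lemma subsetD1_notin (V : finType) (A B : {set V}) x : A \subset B :\ x -> x \notin A.
Proof. by apply: contraTN => xA; rewrite subsetD1 xA andbF. Qed.

Lemma card_setD1_lt (V : finType) (S : {set V}) u : u \in S -> (#|S :\ u| < #|S|)%N.
Proof. by move=> uS; rewrite (cardsD1 u S) uS. Qed.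

Lemma card_setD2_lt (V : finType) (S : {set V}) u v : u \in S -> v \in S :\ u ->
  (#|S :\ u :\ v| < #|S|)%N.
Proof. by move=> uS vS; apply: ltn_trans (card_setD1_lt vS) (card_setD1_lt uS). Qed.

Lemma mem_last_nonnil (T : eqType) (x : T) s : s != [::] -> last x s \in s.
Proof. by case: s => //= y s _; exact: mem_last. Qed.

Lemma set_card_ind (V : finType) (P : {set V} -> Prop) : P set0 ->
  (forall (S : {set V}) u, u \in S ->
     (forall T : {set V}, (#|T| < #|S|)%N -> P T) -> P S) ->
  forall S, P S.
Proof.
move=> P0 IHS S; have [n] := ubnP #|S|; elim: n S => // n IHn S.
have [->|[u uS]] := set_0Vmem S => // ltSn.
by apply: (IHS S u uS) => T ltTS; apply: IHn; apply: leq_trans ltTS _.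
Qed.

Section SetSums.
Variables (R : nmodType) (V : finType).
Implicit Types (S T : {set V}).

Lemma sum_subsets_mem (F : {set V} -> R) S u : u \in S ->
  \sum_(T : {set V} | (T \subset S) && (u \in T)) F T
  = \sum_(T : {set V} | T \subset S :\ u) F (u |: T).
Proof.
move=> uS; rewrite (reindex_onto (fun T => u |: T) (fun T => T :\ u)); last first.
  by move=> T /andP [_ uT]; rewrite setD1K.
apply: eq_bigl => T; rewrite setU11 andbT subUset sub1set uS subsetD1 /=.
have [uT|uT] := boolP (u \in T); last by rewrite setU1K ?eqxx ?andbT.
rewrite andbF; apply/negbTE/negP => /andP [_ /eqP E].
by move: uT; rewrite -E !inE eqxx.
Qed.

Lemma sum_subsets_D1 (F : {set V} -> R) S u : u \in S ->
  \sum_(T : {set V} | T \subset S) F T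
  = \sum_(T : {set V} | T \subset S :\ u) F T
    + \sum_(T : {set V} | T \subset S :\ u) F (u |: T).
Proof.
move=> uS; rewrite (bigID (fun T => u \in T)) /= addrC sum_subsets_mem //.
by congr (_ + _); apply: eq_bigl => T; rewrite subsetD1.
Qed.

Lemma exchange_sum_subsets (P : pred V) (F : {set V} -> V -> R) S :
  \sum_(T : {set V} | T \subset S) \sum_(v in T | P v) F T v
  = \sum_(v in S | P v) \sum_(T : {set V} | (T \subset S) && (v \in T)) F T v.
Proof.
transitivity
  (\sum_(T : {set V} | T \subset S) \sum_(v in S | P v) if v \in T then F T v else 0).
  apply: eq_bigr => T TS; rewrite -big_mkcondr /=; apply: eq_bigl => v.
  by have [vT|] := boolP (v \in T); rewrite ?andbF ?andbT //= (subsetP TS v vT).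
by rewrite exchange_big /=; apply: eq_bigr => v _; rewrite -big_mkcondr.
Qed.

Lemma exchange_sum_setD1 (A : {set V}) (P : pred V) (F : V -> V -> R) :
  \sum_(u in A) \sum_(v in A :\ u | P v) F v u
  = \sum_(v in A | P v) \sum_(u in A :\ v) F v u.
Proof.
rewrite (exchange_big_dep (fun v => (v \in A) && P v)) /=; last first.
  by move=> u v _; rewrite !inE => /andP [/andP [_ ->] ->].
apply: eq_bigr => v /andP [vA Pv]; apply: eq_bigl => u; rewrite !inE Pv vA andbT.
by rewrite eq_sym; case: (u \in A); rewrite ?andbF ?andbT.
Qed.

Lemma big_setD1_cond (A : {set V}) v (P : pred V) (F : V -> R) : v \in A ->
  \sum_(u in A | P u) F u
  = (if P v then F v else 0) + \sum_(u in A | P u && (u != v)) F u.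
Proof.
move=> vA; have [Pv|Pv] := boolP (P v).
  by rewrite (bigD1 v) /= ?vA ?Pv //; congr (_ + _); apply: eq_bigl => u; rewrite andbA.
rewrite add0r; apply: eq_bigl => u.
by have [->|] := eqVneq u v; rewrite ?(negbTE Pv) ?andbF ?andbT.
Qed.

End SetSums.

Section RealPolynomials.
Variable C : numClosedFieldType.
Implicit Types (p q : {poly C}) (x : C).

Definition real_poly p : Prop := map_poly Num.conj p = p.

Lemma real_polyXsubC x : x \is Num.real -> real_poly ('X - x%:P).
Proof. by move=> /CrealP xr; rewrite /real_poly rmorphB /= map_polyX map_polyC /= xr. Qed.

Lemma real_polyZ x p : x \is Num.real -> real_poly p -> real_poly (x *: p).
Proof. by move=> /CrealP xr rp; rewrite /real_poly map_polyZ /= rp xr. Qed.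

Lemma real_poly_exp p n : real_poly p -> real_poly (p ^+ n).
Proof. by move=> rp; rewrite /real_poly rmorphXn /= rp. Qed.

Lemma real_poly_divp p q : real_poly p -> real_poly q -> real_poly (p %/ q).
Proof. by move=> rp rq; rewrite /real_poly map_divp rp rq. Qed.

Lemma real_poly_horner p x : real_poly p -> x \is Num.real -> p.[x] \is Num.real.
Proof.
by move=> rp /CrealP xr; apply/CrealP; rewrite -horner_map /= rp xr.
Qed.

Lemma Im_invr_le0 (y q : C) : y \is Num.real -> y ^+ 2 <= y * 'Im q ->
  y * 'Im (q^-1) <= 0.
Proof.
move=> yr le; rewrite ImV mulNr mulrN oppr_le0 mulrA divr_ge0 ?exprn_ge0 ?normr_ge0 //.
by apply: le_trans le; apply: real_exprn_even_ge0.
Qed.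

End RealPolynomials.

Section Multiplicity.
Variable F : fieldType.
Implicit Types (p : {poly F}) (t : F).

Lemma dvdp_mup t p : ('X - t%:P) ^+ mup t p %| p.
Proof. by have [->|pn0] := eqVneq p 0; rewrite ?dvdp0 // -mup_geq. Qed.

Lemma dvdp_deriv_XsubC_exp t p n :
  ('X - t%:P) ^+ n %| p -> ('X - t%:P) ^+ n.-1 %| p^`().
Proof.
move=> /divpK <-; rewrite derivM deriv_exp derivXsubC mul1r.
apply: dvdp_add; first by apply/dvdp_mull/dvdp_exp2l/leq_pred.
by apply: dvdp_mull; rewrite -mulr_natr; apply: dvdp_mulr.
Qed.

Lemma dvdp_XsubC_exp_mul t p q m n k :
  ('X - t%:P) ^+ m %| p -> ('X - t%:P) ^+ n %| q -> (k <= m + n)%N ->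
  ('X - t%:P) ^+ k %| p * q.
Proof.
move=> dvd_p dvd_q le_k; apply: dvdp_trans (dvdp_mul dvd_p dvd_q).
by rewrite -exprD dvdp_exp2l.
Qed.

End Multiplicity.

Section ClosedFieldRoots.
Variable F : closedFieldType.
Implicit Types (p q : {poly F}).

Lemma mup_count_roots q : q != 0 ->
  exists2 r : seq F, size r = (size q).-1 & forall z, mup z q = count_mem z r.
Proof.
move=> qn0; have [r qE] := closed_field_poly_normal q; exists r.
  by rewrite {1}qE size_scale ?lead_coef_eq0 // size_prod_XsubC.
by move=> z; rewrite {1}qE -mul_polyC mupMr ?mu_prod_XsubC // rootC lead_coef_eq0.
Qed.

Lemma distinct_roots_ge p q : p != 0 -> q != 0 ->
  (forall z, root p z -> (mup z p <= (mup z q).+1)%N) ->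
  exists s, [/\ uniq s, all (root p) s & (size p - size q <= size s)%N].
Proof.
move=> pn0 qn0 le_pq; have [rp size_rp mup_p] := mup_count_roots pn0.
have [rq size_rq mup_q] := mup_count_roots qn0.
have root_p z : z \in rp -> root p z.
  by move=> zr; rewrite -dvdp_XsubCl XsubC_dvd // mup_p -has_count has_pred1.
exists (undup rp); split; first exact: undup_uniq.
  by apply/allP => z; rewrite mem_undup; exact: root_p.
have [s sub_s perm_s] : exists2 s, subseq s (rq ++ undup rp) & perm_eq rp s.
  apply/count_subseqP => z; rewrite count_cat (count_uniq_mem _ (undup_uniq rp)) mem_undup.
  have [zr|/count_memPn -> //] := boolP (z \in rp).
  by rewrite -mup_p -mup_q addn1 le_pq ?root_p.
have q_gt0 : (0 < size q)%N by rewrite size_poly_gt0.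
have := size_subseq sub_s; rewrite -(perm_size perm_s) size_cat size_rp size_rq.
set k := size (undup rp); lia.
Qed.

End ClosedFieldRoots.

Section WeightedSquares.
Variable C : numClosedFieldType.
Implicit Types (L : seq (C * {poly C})) (t : C).

Definition wsum_sq L : {poly C} := \sum_(x <- L) x.1 *: x.2 ^+ 2.

Definition pos_real_terms L := forall x, x \in L -> 0 < x.1 /\ real_poly x.2.

(* At a real point every term of a weighted sum of squares with positive
   weights and real polynomials is nonnegative, so no cancellation occurs. *)
Lemma wsum_sq_dvdp_step t L k : t \is Num.real -> pos_real_terms L ->
  (forall x, x \in L -> ('X - t%:P) ^+ k %| x.2) ->
  ('X - t%:P) ^+ (2 * k).+1 %| wsum_sq L ->
  forall x, x \in L -> ('X - t%:P) ^+ k.+1 %| x.2.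
Proof.
move=> tr posL dvdL; set d := 'X - t%:P.
have dn0 : d != 0 by rewrite polyXsubC_eq0.
pose h (x : C * {poly C}) := x.2 %/ d ^+ k.
have hE x : x \in L -> x.2 = h x * d ^+ k by move=> /dvdL /divpK.
have wsosE : wsum_sq L = d ^+ (2 * k) * \sum_(x <- L) x.1 *: h x ^+ 2.
  rewrite /wsum_sq mulr_sumr big_seq_cond [RHS]big_seq_cond.
  apply: eq_bigr => x /andP [xL _].
  by rewrite (hE x xL) -scalerAr exprMn -exprM mulnC mulrC.
have ge0 x : x \in L -> 0 <= (x.1 *: h x ^+ 2).[t].
  move=> xL; have [x1 rx2] := posL x xL; rewrite hornerZ horner_exp.
  apply: mulr_ge0; first exact: ltW.
  apply: real_exprn_even_ge0 => //; apply: real_poly_horner => //.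
  exact/real_poly_divp/real_poly_exp/real_polyXsubC.
rewrite wsosE exprSr dvdp_mul2l ?expf_neq0 // dvdp_XsubCl /root horner_sum.
rewrite big_seq_cond psumr_eq0 => [/allP h0 x xL|x /andP [xL _]]; last exact: ge0.
rewrite (hE x xL) exprS dvdp_mul2r ?expf_neq0 // dvdp_XsubCl /root.
have [x1 _] := posL x xL; move: (h0 x xL); rewrite xL /= hornerZ mulf_eq0.
by rewrite (gt_eqF x1) horner_exp expf_eq0.
Qed.

Lemma wsum_sq_dvdp t L k : t \is Num.real -> pos_real_terms L ->
  ('X - t%:P) ^+ (2 * k).+1 %| wsum_sq L ->
  forall x, x \in L -> ('X - t%:P) ^+ k.+1 %| x.2.
Proof.
move=> tr posL; elim: k => [|k IHk] dvdL.
  by apply: wsum_sq_dvdp_step => // x _; rewrite expr0 dvd1p.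
apply: wsum_sq_dvdp_step => //; apply: IHk; apply: dvdp_trans dvdL.
by apply: dvdp_exp2l; rewrite ltnS mulnS addSn ltnW // ltnS leq_addl.
Qed.

Lemma wsum_sq_dvdp_mup t L N a g : t \is Num.real -> pos_real_terms L ->
  (a, g) \in L -> g != 0 -> ('X - t%:P) ^+ N %| wsum_sq L -> (N <= 2 * mup t g)%N.
Proof.
move=> tr posL agL gn0 dvdL; rewrite leqNgt; apply/negP => ltN.
have dvd2 : ('X - t%:P) ^+ (2 * mup t g).+1 %| wsum_sq L.
  by apply: dvdp_trans dvdL; apply: dvdp_exp2l.
by have := wsum_sq_dvdp tr posL dvd2 agL; rewrite /= -mup_geq // ltnn.
Qed.

End WeightedSquares.

Section Matchings.
Variables (V : finType) (adj : rel V).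
Hypotheses (adj_sym : symmetric adj) (adj_irr : irreflexive adj).
Implicit Types (S e : {set V}) (M : {set {set V}}).

Lemma is_edge_inP S e :
  reflect (exists x y, [/\ adj x y, x \in S, y \in S & e = [set x; y]])
          (is_edge_in adj S e).
Proof.
apply: (iffP existsP) => [[x /existsP [y /and4P [a b c /eqP d]]]|[x [y [a b c d]]]].
  by exists x, y.
by exists x; apply/existsP; exists y; rewrite a b c d eqxx.
Qed.

Lemma is_edge_in_subset S e :
  is_edge_in adj S e = is_edge_in adj [set: V] e && (e \subset S).
Proof.
apply/is_edge_inP/andP => [[x [y [a xS yS ->]]]|[/is_edge_inP [x [y [a _ _ ->]]] eS]].
  split; first by apply/is_edge_inP; exists x, y; rewrite !inE.
  by apply/subsetP => z; rewrite !inE => /orP [] /eqP ->.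
by exists x, y; split => //; apply: (subsetP eS); rewrite !inE eqxx ?orbT.
Qed.

Lemma card_edge S e : is_edge_in adj S e -> #|e| = 2%N.
Proof.
case/is_edge_inP => x [y [a _ _ ->]]; rewrite cards2.
by case: eqP a => // ->; rewrite adj_irr.
Qed.

Lemma is_matchingP S M : reflect
  ((forall e, e \in M -> is_edge_in adj S e) /\
   (forall e1 e2, e1 \in M -> e2 \in M -> e1 != e2 -> [disjoint e1 & e2]))
  (is_matching adj S M).
Proof.
apply: (iffP andP) => [[/forall_inP h1 /forall_inP h2]|[h1 h2]].
  by split => // e1 e2 /h2 /forall_inP h /h /implyP.
split; apply/forall_inP => // e1 i1; apply/forall_inP => e2 i2; apply/implyP; exact: h2.
Qed.

Lemma matching_card S M : is_matching adj S M -> (2 * #|M| <= #|S|)%N.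
Proof.
case/is_matchingP => edgeM disjM.
have trivM : trivIset M by apply/trivIsetP => e1 e2; exact: disjM.
have <- : #|cover M| = (2 * #|M|)%N.
  rewrite -(eqP trivM) (eq_bigr (fun _ => 2%N)); last by move=> e /edgeM /card_edge.
  by rewrite sum_nat_const mulnC.
apply/subset_leq_card/bigcupsP => e /edgeM.
by rewrite is_edge_in_subset => /andP [].
Qed.

Lemma is_matching_set0 M : is_matching adj set0 M = (M == set0).
Proof.
apply/is_matchingP/eqP => [[edgeM _]|->]; last by split => e; rewrite inE.
apply/setP => e; rewrite inE; apply/negP => /edgeM.
rewrite is_edge_in_subset subset0 => /andP [/is_edge_inP [x [y [_ _ _ ->]]]].
by move=> /eqP /setP /(_ x); rewrite !inE eqxx.
Qed.

Lemma is_matching_setD1 S u M :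
  is_matching adj S M && ~~ [exists e in M, u \in e] = is_matching adj (S :\ u) M.
Proof.
apply/andP/is_matchingP => [[/is_matchingP [edgeM disjM] /exists_inPn uM]|[edgeM disjM]].
  split => // e eM; move: (edgeM e eM).
  rewrite (is_edge_in_subset S) (is_edge_in_subset (S :\ u)) subsetD1 uM //.
  by case/andP => -> ->.
split; last first.
  by apply/exists_inPn => e /edgeM; rewrite is_edge_in_subset subsetD1 => /and3P [].
apply/is_matchingP; split => // e /edgeM.
by rewrite (is_edge_in_subset _ e) (is_edge_in_subset S e) subsetD1 => /and3P [-> ->].
Qed.

Lemma matching_edge_at S M e u : is_matching adj S M -> e \in M -> u \in e ->
  exists v, [/\ v \in S :\ u, adj u v & e = [set u; v]].
Proof.
case/is_matchingP => edgeM _ eM; case/is_edge_inP: (edgeM e eM) => x [y [a xS yS ->]].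
rewrite !inE => /orP [] /eqP ->.
  exists y; rewrite !inE yS andbT a; split => //.
  by apply: contraTneq a => ->; rewrite adj_irr.
exists x; rewrite !inE xS andbT adj_sym a setUC; split => //.
by apply: contraTneq a => ->; rewrite adj_irr.
Qed.

Lemma matching_partner_uniq S M u v v' : is_matching adj S M ->
  [set u; v] \in M -> [set u; v'] \in M -> v' != u -> v' = v.
Proof.
case/is_matchingP => _ disjM uvM uv'M v'u.
have [E|neq] := eqVneq [set u; v] [set u; v'].
  have : v' \in [set u; v] by rewrite E !inE eqxx orbT.
  by rewrite !inE (negbTE v'u) => /eqP.
by have := disjointFr (disjM _ _ uvM uv'M neq) (set21 u v); rewrite set21.
Qed.

Lemma is_matching_setU1 S u v M : u \in S -> v \in S :\ u -> adj u v ->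
  is_matching adj S ([set u; v] |: M) && ([set u; v] \notin M)
  = is_matching adj (S :\ u :\ v) M.
Proof.
move=> uS vS a; set e := [set u; v].
have eS : is_edge_in adj S e.
  by apply/is_edge_inP; exists u, v; move: vS; rewrite !inE => /andP [_ ->].
apply/andP/is_matchingP => [[/is_matchingP [edgeM disjM] eM]|[edgeM disjM]].
  have disj_e f : f \in M -> [disjoint e & f].
    move=> fM; apply: disjM; rewrite ?inE ?fM ?eqxx ?orbT //.
    by apply: contraNneq eM => ->.
  split; last by move=> e1 e2 i1 i2; apply: disjM; rewrite inE ?i1 ?i2 orbT.
  move=> f fM; move: (edgeM f); rewrite inE fM orbT => /(_ isT).
  rewrite (is_edge_in_subset S) (is_edge_in_subset (S :\ u :\ v) f) => /andP [-> fS].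
  by rewrite !subsetD1 fS !(disjointFr (disj_e f fM)) // !inE eqxx ?orbT.
have uvM f : f \in M -> (u \notin f) && (v \notin f).
  move=> /edgeM; rewrite is_edge_in_subset !subsetD1.
  by case/andP => _ /andP [/andP [_ ->] ->].
split; last by apply/negP => /uvM; rewrite !inE eqxx.
apply/is_matchingP; split.
  move=> f; rewrite in_setU1 => /orP [/eqP -> //|/edgeM].
  rewrite (is_edge_in_subset (S :\ u :\ v) f) (is_edge_in_subset S f) !subsetD1.
  by case/andP => -> /andP [/andP [-> _] _].
have disj_e f : f \in M -> [disjoint e & f].
  move=> /uvM /andP [uf vf]; rewrite disjoints_subset.
  by apply/subsetP => x; rewrite !inE => /orP [] /eqP ->.
move=> e1 e2; rewrite !in_setU1 => /orP [/eqP ->|i1] /orP [/eqP ->|i2] //.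
- by rewrite eqxx.
- by move=> _; exact: disj_e.
- by move=> _; rewrite disjoint_sym; exact: disj_e.
- exact: disjM.
Qed.

End Matchings.

Section MatchingPolynomial.
Variables (C : numClosedFieldType) (V : finType) (adj : rel V).
Hypotheses (adj_sym : symmetric adj) (adj_irr : irreflexive adj).
Variable w : {set V} -> C.
Implicit Types (S : {set V}) (M : {set {set V}}).

Definition matching_term S M : {poly C} :=
  ((-1) ^+ #|M| * \prod_(e in M) `|w e| ^+ 2) *: 'X^(#|S| - 2 * #|M|).

Lemma mu_wE S : mu_w adj w S = \sum_(M | is_matching adj S M) matching_term S M.
Proof. by []. Qed.

Lemma mu_w_set0 : mu_w adj w set0 = 1.
Proof.
rewrite mu_wE (big_pred1 set0) => [|M]; last by rewrite is_matching_set0.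
by rewrite /matching_term !cards0 big_set0 expr0 mulr1 scale1r.
Qed.

Lemma sum_matchings_avoiding S u : u \in S ->
  \sum_(M | is_matching adj S M && ~~ [exists e in M, u \in e]) matching_term S M
  = 'X * mu_w adj w (S :\ u).
Proof.
move=> uS; rewrite mu_wE mulr_sumr (eq_bigl _ _ (is_matching_setD1 adj S u)).
apply: eq_bigr => M /(matching_card adj_irr) leM.
rewrite /matching_term -scalerAr -exprS; congr (_ *: 'X^_).
by rewrite (cardsD1 u S) uS add1n subSn.
Qed.

Lemma sum_matchings_covering S u :
  \sum_(M | is_matching adj S M && [exists e in M, u \in e]) matching_term S M
  = \sum_(v in S :\ u | adj u v)
       \sum_(M | is_matching adj S M && ([set u; v] \in M)) matching_term S M.
Proof.
under [RHS]eq_bigr => v _.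
  rewrite (eq_bigl (fun M => (is_matching adj S M && [exists e in M, u \in e])
                              && ([set u; v] \in M))); last first.
    move=> M /=; case: ([set u; v] \in M) / boolP => uvM; rewrite ?andbF ?andbT //.
    suff -> : [exists e in M, u \in e] by rewrite andbT.
    by apply/exists_inP; exists [set u; v]; rewrite // !inE eqxx.
  rewrite big_mkcondr /=.
over.
rewrite exchange_big /=; apply: eq_bigr => M /andP [matchM /exists_inP [e eM ue]].
rewrite -big_mkcondr /=.
have [v [vS a E]] := matching_edge_at adj_sym adj_irr matchM eM ue; rewrite E in eM.
rewrite (big_pred1 v) // => v' /=; apply/idP/idP => [/andP [/andP [v'S _] uv'M]|/eqP ->].
  apply/eqP; apply: (matching_partner_uniq matchM eM uv'M).
  by move: v'S; rewrite !inE => /andP [].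
by rewrite vS a eM.
Qed.

Lemma sum_matchings_containing S u v : u \in S -> v \in S :\ u -> adj u v ->
  \sum_(M | is_matching adj S M && ([set u; v] \in M)) matching_term S M
  = - (`|w [set u; v]| ^+ 2) *: mu_w adj w (S :\ u :\ v).
Proof.
move=> uS vS a; set e := [set u; v].
rewrite (reindex_onto (fun M' => e |: M') (fun M => M :\ e)); last first.
  by move=> M /andP [_ eM]; rewrite setD1K.
rewrite mu_wE scaler_sumr; apply: eq_big => M.
  rewrite -(is_matching_setU1 M uS vS a) setU11 andbT; congr (_ && _).
  apply/eqP/idP => [<-|eM]; last by rewrite setU1K.
  by rewrite !inE eqxx.
move=> /andP [_ /eqP E].
have eM : e \notin M by rewrite -E !inE eqxx.
have cardS : #|S| = (#|S :\ u :\ v|).+2.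
  by rewrite (cardsD1 u S) uS (cardsD1 v (S :\ u)) vS.
rewrite /matching_term scalerA cardsU1 eM big_setU1 //= cardS exprS mulnDr muln1.
rewrite add2n !subSS; congr (_ *: _).
by rewrite exprD expr1 mulN1r !mulNr mulrCA.
Qed.

Lemma mu_w_rec S u : u \in S ->
  mu_w adj w S = 'X * mu_w adj w (S :\ u)
     - \sum_(v in S :\ u | adj u v) `|w [set u; v]| ^+ 2 *: mu_w adj w (S :\ u :\ v).
Proof.
move=> uS; rewrite mu_wE (bigID (fun M : {set {set V}} => [exists e in M, u \in e])) /=.
rewrite addrC sum_matchings_avoiding // sum_matchings_covering -sumrN.
congr (_ + _); apply: eq_bigr => v /andP [vS a].
by rewrite sum_matchings_containing // scaleNr.
Qed.

End MatchingPolynomial.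

Section EtaRecurrence.
Variables (C : numClosedFieldType) (V : finType) (adj : rel V).
Hypotheses (adj_sym : symmetric adj) (adj_irr : irreflexive adj).
Variables (w : {set V} -> C) (w1 : V -> C).
Implicit Types (S T : {set V}).

Definition eta_sign S T : C := (-1) ^+ #|S :\: T| * \prod_(y in S :\: T) w1 y.

Definition eta_on S : {poly C} :=
  \sum_(T : {set V} | T \subset S) eta_sign S T *: mu_w adj w T.

Lemma eta_w_setT : eta_w adj w w1 = eta_on [set: V].
Proof.
apply: eq_big => [T|T _]; first by rewrite subsetT.
by rewrite /eta_sign setTD.
Qed.

Lemma eta_on_set0 : eta_on set0 = 1.
Proof.
rewrite /eta_on (big_pred1 set0) => [|T]; last by rewrite subset0.
by rewrite mu_w_set0 /eta_sign setD0 cards0 big_set0 expr0 mul1r scale1r.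
Qed.

Lemma eta_sign_setU1 S T u : eta_sign S (u |: T) = eta_sign (S :\ u) T.
Proof. by rewrite /eta_sign setDDl. Qed.

Lemma eta_sign_notin S T u : u \in S -> T \subset S :\ u ->
  eta_sign S T = - w1 u * eta_sign (S :\ u) T.
Proof.
move=> uS /subsetD1_notin uT.
have ST : S :\: T = u |: (S :\ u :\: T).
  by apply/setP => y; rewrite !inE; have [->|_] := eqVneq y u; rewrite ?uS ?(negbTE uT).
have uST : u \notin S :\ u :\: T by rewrite !inE eqxx andbF.
rewrite /eta_sign ST cardsU1 uST big_setU1 //= add1n exprS.
by rewrite mulN1r !mulNr mulrCA.
Qed.

Lemma eta_on_rec S u : u \in S ->
  eta_on S = ('X - (w1 u)%:P) * eta_on (S :\ u)
     - \sum_(v in S :\ u | adj u v) `|w [set u; v]| ^+ 2 *: eta_on (S :\ u :\ v).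
Proof.
move=> uS; rewrite /eta_on (sum_subsets_D1 _ uS) mulrBl [RHS]addrAC [RHS]addrC.
congr (_ + _).
  rewrite -mulNr mulr_sumr; apply: eq_bigr => T TS.
  by rewrite (eta_sign_notin uS TS) -polyCN mul_polyC scalerA.
have uTu T : T \subset S :\ u -> (u |: T) :\ u = T.
  by move=> /subsetD1_notin uT; rewrite setU1K.
under eq_bigr => T TS.
  rewrite (mu_w_rec adj_sym adj_irr w (setU11 u T)) eta_sign_setU1 uTu // scalerBr scalerAr.
over.
rewrite big_split /= -mulr_sumr sumrN; congr (_ - _).
under [LHS]eq_bigr => T _ do rewrite scaler_sumr.
rewrite exchange_sum_subsets; apply: eq_bigr => v /andP [vS a].
rewrite scaler_sumr (sum_subsets_mem _ vS); apply: eq_bigr => T TS.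
by rewrite setU1K ?(subsetD1_notin TS) // eta_sign_setU1 scalerA mulrC -scalerA.
Qed.

End EtaRecurrence.

Section VertexRecurrence.
Variables (C : numClosedFieldType) (V : finType) (adj : rel V).
Variables (f : {set V} -> {poly C}) (a : V -> C) (c : V -> V -> C).
Hypothesis a_real : forall u, a u \is Num.real.
Hypothesis c_gt0 : forall u v, adj u v -> 0 < c u v.
Hypothesis f_set0 : f set0 = 1.
Hypothesis f_rec : forall (S : {set V}) u, u \in S ->
  f S = ('X - (a u)%:P) * f (S :\ u)
        - \sum_(v in S :\ u | adj u v) c u v *: f (S :\ u :\ v).
Implicit Types (S : {set V}) (t z : C).

Lemma rec_real S : real_poly (f S).
Proof.
elim/set_card_ind: S => [|S u uS IH]; first by rewrite f_set0 /real_poly rmorph1.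
rewrite (f_rec uS) /real_poly rmorphB rmorphM /= IH ?card_setD1_lt //.
rewrite (real_polyXsubC (a_real u)) rmorph_sum; congr (_ - _).
apply: eq_bigr => v /andP [vS uv]; apply: real_polyZ; first exact/gtr0_real/c_gt0.
by apply: IH; apply: card_setD2_lt.
Qed.

Lemma rec_monic_size S : (f S \is monic) && (size (f S) == #|S|.+1).
Proof.
elim/set_card_ind: S => [|S u uS IH]; first by rewrite f_set0 monic1 size_poly1 cards0.
have /andP [monic_u /eqP size_u] := IH _ (card_setD1_lt uS).
have sizeX : size (('X - (a u)%:P) * f (S :\ u)) = #|S|.+1.
  by rewrite size_monicM ?monicXsubC ?monic_neq0 // size_XsubC size_u (cardsD1 u S) uS.
have sizeN : (size (- \sum_(v in S :\ u | adj u v) c u v *: f (S :\ u :\ v)) < #|S|.+1)%N.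
  rewrite size_polyN; apply: leq_ltn_trans (size_sum _ _ _) _.
  rewrite (cardsD1 u S) uS ltnS; apply/bigmax_leqP => v /andP [vS _].
  apply: leq_trans (size_scale_leq _ _) _.
  have /andP [_ /eqP ->] := IH _ (card_setD2_lt uS vS).
  by rewrite (cardsD1 v (S :\ u)) vS.
rewrite (f_rec uS); apply/andP; split; last by rewrite size_polyDl ?sizeX.
by rewrite monicE lead_coefDl ?sizeX // -monicE monicMl ?monicXsubC.
Qed.

Lemma rec_size S : size (f S) = #|S|.+1.
Proof. by case/andP: (rec_monic_size S) => _ /eqP. Qed.

Lemma rec_neq0 S : f S != 0.
Proof. by rewrite -size_poly_gt0 rec_size. Qed.

(* The ratio f S / f (S :\ u) is [z - a u] minus positive multiples of
   inverses of ratios of the same kind, so it maps the upper (lower) half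
   plane into itself; in particular f S has no nonreal root. *)
Lemma rec_ratio_Im z : 'Im z != 0 -> forall S,
  (f S).[z] != 0 /\
  (forall u, u \in S -> 'Im z ^+ 2 <= 'Im z * 'Im ((f S).[z] / (f (S :\ u)).[z])).
Proof.
move=> nz; have yr : 'Im z \is Num.real by apply: Creal_Im.
have y2 : 0 < 'Im z ^+ 2 by rewrite real_exprn_even_gt0.
elim/set_card_ind => [|S u0 u0S IH].
  by split => [|u]; rewrite ?f_set0 ?hornerC ?oner_neq0 ?inE.
have ratio u : u \in S -> 'Im z ^+ 2 <= 'Im z * 'Im ((f S).[z] / (f (S :\ u)).[z]).
  move=> uS; have [fu_nz Hu] := IH _ (card_setD1_lt uS).
  have -> : (f S).[z] / (f (S :\ u)).[z] = (z - a u) -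
      \sum_(v in S :\ u | adj u v) c u v * ((f (S :\ u :\ v)).[z] / (f (S :\ u)).[z]).
    rewrite (f_rec uS) hornerD hornerN hornerM horner_sum !hornerE mulrBl mulfK //.
    by rewrite mulr_suml; congr (_ - _); apply: eq_bigr => v _; rewrite hornerZ mulrA.
  rewrite raddfB raddf_sum raddfB /= (Creal_ImP _ (a_real u)) subr0 mulrBr -expr2.
  rewrite lerDl -mulrN -sumrN mulr_sumr sumr_ge0 // => v /andP [vS uv].
  rewrite ImMl ?gtr0_real ?c_gt0 // -invf_div mulrN oppr_ge0 mulrCA.
  exact: mulr_ge0_le0 (ltW (c_gt0 uv)) (Im_invr_le0 yr (Hu v vS)).
split => //; apply/negP => /eqP fS0; have := ratio u0 u0S.
by rewrite fS0 mul0r raddf0 mulr0 => /(lt_le_trans y2); rewrite ltxx.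
Qed.

Lemma rec_root_real S z : root (f S) z -> z \is Num.real.
Proof.
move=> rz; apply/Creal_ImP/eqP; apply: contraTT rz => nz.
by case: (rec_ratio_Im nz S).
Qed.

Lemma rec_deriv S : (f S)^`() = \sum_(u in S) f (S :\ u).
Proof.
elim/set_card_ind: S => [|S u uS IH].
  by rewrite f_set0 derivC big_pred0 // => u; rewrite inE.
rewrite (big_setD1 _ uS) {1}(f_rec uS) derivB derivM derivXsubC mul1r.
rewrite IH ?card_setD1_lt // raddf_sum /= -addrA; congr (_ + _).
have rec_w v : v \in S :\ u -> f (S :\ v) = ('X - (a u)%:P) * f (S :\ u :\ v)
     - \sum_(x in S :\ u :\ v | adj u x) c u x *: f (S :\ u :\ v :\ x).
  move=> vS; have uSv : u \in S :\ v by rewrite !inE uS andbT eq_sym; case/setD1P: vS.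
  by rewrite (f_rec uSv) (setD1C S v u).
rewrite (eq_bigr _ rec_w) sumrB mulr_sumr; congr (_ - _).
under eq_bigr => v _ do rewrite derivZ.
rewrite (exchange_sum_setD1 _ _ (fun v x => c u v *: f (S :\ u :\ x :\ v))).
apply: eq_bigr => v /andP [vS _]; rewrite IH ?card_setD2_lt // scaler_sumr.
by apply: eq_bigr => x _; rewrite (setD1C (S :\ u) x v).
Qed.

(* [path_terms n S u v] has one entry for each path [P] from [u] to [v] in
   [G[S]] with at most [n.+1] vertices: the product of [c] along the edges of
   [P], paired with [f (S :\: P)]. *)
Fixpoint path_terms n S u v : seq (C * {poly C}) :=
  if n is n'.+1 then
    (if adj u v then [:: (c u v, f (S :\ u :\ v))] else [::]) ++
    flatten [seq [seq (c u x * y.1, y.2) | y <- path_terms n' (S :\ u) x v]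
            | x <- enum (S :\ u) & adj u x && (x != v)]
  else [::].

Lemma wsum_sq_path_terms n S u v : wsum_sq (path_terms n.+1 S u v) =
  (if adj u v then c u v *: f (S :\ u :\ v) ^+ 2 else 0)
  + \sum_(x in S :\ u | adj u x && (x != v)) c u x *: wsum_sq (path_terms n (S :\ u) x v).
Proof.
rewrite /wsum_sq /= big_cat; congr (_ + _).
  by case: (adj u v); rewrite ?big_cons ?big_nil //= addr0.
rewrite big_flatten big_map big_filter big_enum_cond /=; apply: eq_bigr => x _.
by rewrite big_map scaler_sumr; apply: eq_bigr => y _; rewrite scalerA.
Qed.

Lemma path_terms_pos n S u v : pos_real_terms (path_terms n S u v).
Proof.
elim: n S u v => [|n IHn] S u v y //=; rewrite mem_cat => /orP [].
  case: (boolP (adj u v)) => uv; rewrite ?inE // => /eqP -> /=.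
  by split; [exact: c_gt0 | exact: rec_real].
case/flatten_mapP => x; rewrite mem_filter => /andP [/andP [ux _] _] /mapP [y' y'L ->] /=.
by have [y'1 y'2] := IHn _ _ _ _ y'L; split => //; exact: mulr_gt0 (c_gt0 ux) y'1.
Qed.

Lemma rec_path_identity S u v : u \in S -> v \in S -> u != v ->
  f (S :\ u) * f (S :\ v) - f S * f (S :\ u :\ v) = wsum_sq (path_terms #|S| S u v).
Proof.
elim/set_card_ind: S u v => [|S _ _ IH] u v; first by rewrite inE.
move=> uS vS uv; set H := S :\ u.
have vH : v \in H by rewrite !inE vS andbT eq_sym.
have uSv : u \in S :\ v by rewrite !inE uS andbT.
rewrite (cardsD1 u S) uS wsum_sq_path_terms (f_rec uS) (f_rec uSv) (setD1C S v u) -/H.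
set A := \sum_(x in H | adj u x) c u x *: f (H :\ x).
set B := \sum_(x in H :\ v | adj u x) c u x *: f (H :\ v :\ x).
have -> : f H * (('X - (a u)%:P) * f (H :\ v) - B)
           - (('X - (a u)%:P) * f H - A) * f (H :\ v)
         = A * f (H :\ v) - f H * B by ring.
rewrite /A /B mulr_suml mulr_sumr (big_setD1_cond _ _ vH) -addrA; congr (_ + _).
  by case: (adj u v) => //; rewrite -scalerAl expr2.
rewrite [X in _ - X](eq_bigl (fun x => (x \in H) && (adj u x && (x != v)))); last first.
  by move=> x; rewrite in_setD1; case: (x \in H); case: (adj u x); case: (x == v).
rewrite -sumrB; apply: eq_bigr => x /andP [xH /andP [_ xv]].
by rewrite -scalerAl -scalerAr -scalerBr (setD1C H v x) IH ?card_setD1_lt.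
Qed.

Lemma rec_deriv_identity S u : u \in S ->
  f (S :\ u) * (f S)^`() - (f (S :\ u))^`() * f S
  = f (S :\ u) ^+ 2 + \sum_(v in S :\ u) wsum_sq (path_terms #|S| S u v).
Proof.
move=> uS; rewrite !rec_deriv (big_setD1 _ uS) mulrDr expr2 -addrA; congr (_ + _).
rewrite mulr_sumr mulr_suml -sumrB; apply: eq_bigr => v /setD1P [vu vS].
by rewrite -rec_path_identity // 1?eq_sym // [f S * _]mulrC.
Qed.

Lemma mup_rec_setD1 S u t : u \in S -> (mup t (f S) <= (mup t (f (S :\ u))).+1)%N.
Proof.
move=> uS; have [rt|/mupNroot -> //] := boolP (root (f S) t).
set m := mup t (f S); set m' := mup t (f (S :\ u)).
set L := (1, f (S :\ u)) :: flatten [seq path_terms #|S| S u v | v <- enum (S :\ u)].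
have posL : pos_real_terms L.
  move=> x; rewrite inE => /orP [/eqP -> |]; first by split; [exact: ltr01|exact: rec_real].
  by case/flatten_mapP => v _; apply: path_terms_pos.
have dvdL : ('X - t%:P) ^+ (m + m').-1 %| wsum_sq L.
  rewrite /wsum_sq big_cons scale1r big_flatten big_map big_enum -rec_deriv_identity //.
  have dvd_deriv g : ('X - t%:P) ^+ (mup t g).-1 %| g^`().
    exact/dvdp_deriv_XsubC_exp/dvdp_mup.
  apply: dvdp_sub.
  - by apply: dvdp_XsubC_exp_mul (dvdp_mup t _) (dvd_deriv _) _; lia.
  - by apply: dvdp_XsubC_exp_mul (dvd_deriv _) (dvdp_mup t _) _; lia.
have := wsum_sq_dvdp_mup (rec_root_real rt) posL (mem_head _ _) (rec_neq0 _) dvdL.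
rewrite -/m'; lia.
Qed.

Lemma mup_rec_path_terms S u v (P : {set V}) k t :
  u \in S -> v \in S -> u != v -> (k, f (S :\: P)) \in path_terms #|S| S u v ->
  (mup t (f S) <= (mup t (f (S :\: P))).+1)%N.
Proof.
move=> uS vS uv PL; have [rt|/mupNroot -> //] := boolP (root (f S) t).
have vSu : v \in S :\ u by rewrite !inE vS andbT eq_sym.
have le_u := mup_rec_setD1 t uS; have le_v := mup_rec_setD1 t vS.
have le_uv := mup_rec_setD1 t vSu.
set m := mup t (f S); rewrite -/m in le_u le_v le_uv.
have dvdL : ('X - t%:P) ^+ (m.-1 + m.-1) %| wsum_sq (path_terms #|S| S u v).
  rewrite -rec_path_identity //; apply: dvdp_sub.
  - by apply: dvdp_XsubC_exp_mul (dvdp_mup t _) (dvdp_mup t _) _; lia.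
  - by apply: dvdp_XsubC_exp_mul (dvdp_mup t _) (dvdp_mup t _) _; lia.
have := wsum_sq_dvdp_mup (rec_root_real rt) (@path_terms_pos _ _ _ _) PL (rec_neq0 _) dvdL.
lia.
Qed.

Lemma path_terms_mem (q : seq V) S u : u \in S -> path adj u q -> uniq (u :: q) ->
  all (mem S) q -> q != [::] ->
  exists k, (k, f (S :\: [set x in u :: q])) \in path_terms #|S| S u (last u q).
Proof.
elim: q S u => [|v q IHq] // S u uS /= /andP [uv path_q] /andP [uq uniq_q].
case/andP => vS qS _; rewrite (cardsD1 u S) uS /=.
have [->|q_nil] := eqVneq q [::].
  exists (c u v); rewrite mem_cat uv inE; apply/orP; left; apply/eqP; congr (_, f _).
  by rewrite set_cons set_seq1 setDDl.
have vSu : v \in S :\ u.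
  by rewrite !inE vS andbT; apply: contraNneq uq => ->; rewrite inE eqxx.
have qSu : all (mem (S :\ u)) q.
  apply/allP => y yq; have yS : y \in S := allP qS y yq; rewrite /= !inE yS andbT.
  by apply: contraNneq uq => <-; rewrite inE yq orbT.
have [k kL] := IHq (S :\ u) v vSu path_q uniq_q qSu q_nil.
exists (c u v * k); rewrite mem_cat; apply/orP; right; apply/flatten_mapP; exists v.
  rewrite mem_filter mem_enum vSu uv andbT /=.
  by apply: contraTneq uniq_q => ->; rewrite mem_last_nonnil.
rewrite set_cons -setDDl.
exact: (map_f (fun y => (c u v * y.1, y.2)) kL).
Qed.

Lemma mup_rec_gpath S (p : seq V) t : is_gpath adj p -> all (mem S) p ->
  (mup t (f S) <= (mup t (f (S :\: [set x in p]))).+1)%N.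
Proof.
case: p => [|u q] //= /andP [uniq_p path_q] /andP [uS qS].
have [q_nil|q_nil] := eqVneq q [::].
  by rewrite q_nil set_seq1; exact: mup_rec_setD1.
have [k kL] := path_terms_mem uS path_q uniq_p qS q_nil.
apply: (mup_rec_path_terms _ uS _ _ kL); first exact/(allP qS)/mem_last_nonnil.
by apply: contraTneq uniq_p => ->; rewrite /= mem_last_nonnil.
Qed.

Lemma mup_rec_cover (P : seq (seq V)) S t :
  all (is_gpath adj) P -> uniq (flatten P) -> all (mem S) (flatten P) ->
  (mup t (f S) <= size P + mup t (f (S :\: [set x in flatten P])))%N.
Proof.
elim: P S => [|p P IHP] S /=; first by rewrite set_nil setD0.
case/andP => gp gP; rewrite cat_uniq all_cat => /and3P [_ pP uP] /andP [pS PS].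
set S1 := S :\: [set x in p].
have PS1 : all (mem S1) (flatten P).
  apply/allP => y yP; have yS : y \in S := allP PS y yP.
  by rewrite /= !inE yS andbT; apply: contra pP => yp; apply/hasP; exists y.
have -> : [set x in p ++ flatten P] = [set x in p] :|: [set x in flatten P].
  by apply/setP => y; rewrite !inE mem_cat.
have := mup_rec_gpath t gp pS; have := IHP S1 gP uP PS1.
rewrite setDDl -/S1; lia.
Qed.

End VertexRecurrence.

Theorem corollary4p7 (C : numClosedFieldType) (V : finType) (adj : rel V)
    (adj_sym : symmetric adj) (adj_irr : irreflexive adj)
    (w : {set V} -> C) (w1 : V -> C)
    (w_nz : forall x y : V, adj x y -> w [set x; y] != 0)
    (w1_real : forall y : V, w1 y \is Num.real) :
  (forall (z : C) (P : seq (seq V)),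
     root (eta_w adj w w1) z -> is_path_cover adj P ->
     (mup z (eta_w adj w w1) <= size P)%N)
  /\
  (forall p : seq V, is_gpath adj p ->
     exists s : seq C,
       [/\ uniq s, all (root (eta_w adj w w1)) s & (size p <= size s)%N]).
Proof.
pose c u v := `|w [set u; v]| ^+ 2.
have c_gt0 u v : adj u v -> 0 < c u v by move=> uv; rewrite exprn_gt0 // normr_gt0 w_nz.
have eta_set0 := eta_on_set0 adj w w1.
have eta_rec := eta_on_rec adj_sym adj_irr w w1.
have all_setT (s : seq V) : all (mem [set: V]) s by apply/allP => y; rewrite /= inE.
rewrite eta_w_setT; split.
  move=> z P _ /andP [/andP [gP uP] /eqP cardP].
  have coverP : [set x in flatten P] = [set: V].
    by apply/eqP; rewrite eqEcard subsetT cardsT cardP -(card_uniqP uP) cardsE /=.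
  have := mup_rec_cover w1_real c_gt0 eta_set0 eta_rec z gP uP (all_setT _).
  by rewrite coverP setDv eta_set0 (mupNroot (root1 z)) addn0.
move=> p gp; set Sp := [set: V] :\: [set x in p].
have eta_neq0 := rec_neq0 (c := c) eta_set0 eta_rec.
have [s [uniq_s roots_s size_s]] := distinct_roots_ge (eta_neq0 _) (eta_neq0 Sp)
  (fun z _ => mup_rec_gpath w1_real c_gt0 eta_set0 eta_rec z gp (all_setT p)).
exists s; split => //; apply: leq_trans size_s.
have uniq_p : uniq p by case: (p) gp => //= x q /andP [].
have := cardsC [set x in p].
rewrite !(rec_size eta_set0 eta_rec) /Sp setTD cardsT cardsE (card_uniqP uniq_p).
lia.
Qed.
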